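(* Let $\mathbb{A}$ be an epistemic Heyting algebra and $a\in\mathbb{A}$. If $b\in\mathsf{Min}_i(\mathbb{A})$ and $b\wedge a\neq\bot$, then $[b]\in\mathsf{Min}_i(\mathbb{A}^a)$.
   Context: Fix a set $\mathsf{Ag}$ of agents. A monadic Heyting algebra is a Heyting algebra $\mathbb{L}$ with, for each $i\in\mathsf{Ag}$, monotone unary operations $\lozenge_i,\Box_i$ such that for all $a,b$: $a\leq\lozenge_i a$; $\Box_i a\leq a$; $\lozenge_i(a\vee b)\leq\lozenge_i a\vee\lozenge_i b$; $\Box_i(a\to b)\leq\Box_i a\to\Box_i b$; $\lozenge_i a\leq\Box_i\lozenge_i a$; $\lozenge_i\Box_i a\leq\Box_i a$; $\Box_i(a\to b)\leq\lozenge_i a\to\lozenge_i b$; $\lozenge_i\bot\leq\bot$; $\top\leq\Box_i\top$. An epistemic Heyting algebra is a finite monadic Heyting algebra with $\lozenge_i a\vee\neg\lozenge_i a=\top$ for all $i,a$. An element $c$ of such an algebra is $i$-minimal if $c\neq\bot$, $\lozenge_i c=c$, and whenever $d<c$ and $\lozenge_i d=d$ then $d=\bot$; $\mathsf{Min}_i(\cdot)$ is the set of $i$-minimal elements. The pseudo-quotient algebra $\mathbb{A}^a$: $b\cong_a c$ iff $b\wedge a=c\wedge a$; its carrier is the quotient Heyting algebra $\mathbb{L}/{\cong_a}$ (classes $[c]$, so $[b]\leq[c]$ iff $b\wedge a\leq c\wedge a$); $\lozenge^a_i[b]=[\lozenge_i(b\wedge a)]$ and $\Box^a_i[b]=[\Box_i(a\to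 b)]$. $i$-minimality in $\mathbb{A}^a$ is w.r.t. $\lozenge^a_i$. *)

From mathcomp Require Import all_boot all_order.
Set Implicit Arguments. Unset Strict Implicit. Unset Printing Implicit Defensive.
Import Order.TTheory.
Local Open Scope order_scope.

Definition heyting_imp {disp : Order.disp_t} (L : tbDistrLatticeType disp)
  (imp : L -> L -> L) : Prop :=
  forall x y z : L, (x `&` y <= z) = (x <= imp y z).

Definition monadic_heyting {disp : Order.disp_t} (L : tbDistrLatticeType disp)
  (Ag : Type) (imp : L -> L -> L) (dia box : Ag -> L -> L) : Prop :=
  heyting_imp imp /\
  forall i : Ag,
  ((forall a b : L, a <= b -> dia i a <= dia i b) /\
      (forall a b : L, a <= b -> box i a <= box i b) /\
      (forall a : L, a <= dia i a) /\
      (forall a : L, box i a <= a) /\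
      (forall a b : L, dia i (a `|` b) <= dia i a `|` dia i b) /\
      (forall a b : L, box i (imp a b) <= imp (box i a) (box i b)) /\
      (forall a : L, dia i a <= box i (dia i a)) /\
      (forall a : L, dia i (box i a) <= box i a) /\
      (forall a b : L, box i (imp a b) <= imp (dia i a) (dia i b)) /\
      dia i \bot <= \bot /\
      \top <= box i \top).

(* Epistemic Heyting algebra: a finite monadic Heyting algebra (finiteness is
   provided by the carrier being a finTBDistrLatticeType) with
   dia_i a \/ ~ dia_i a = top, where ~x := x -> bot. *)
Definition epistemic_heyting {disp : Order.disp_t} (L : finTBDistrLatticeType disp)
  (Ag : Type) (imp : L -> L -> L) (dia box : Ag -> L -> L) : Prop :=
  monadic_heyting imp dia box /\
  forall (i : Ag) (a : L), dia i a `|` imp (dia i a) \bot = \top.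

Definition is_min {disp : Order.disp_t} (L : tbDistrLatticeType disp)
  (Ag : Type) (dia : Ag -> L -> L) (i : Ag) (c : L) : Prop :=
  [/\ c <> \bot, dia i c = c &
      forall d : L, d < c -> dia i d = d -> d = \bot].

(* The pseudo-quotient algebra A^a, presented on representatives:
   the class [b] of b in L/~=_a, with [b] = [c] iff b /\ a = c /\ a,
   [b] <= [c] iff b /\ a <= c /\ a, bottom [bot], and
   dia^a_i [b] = [dia_i (b /\ a)], box^a_i [b] = [box_i (a -> b)]. *)
Definition qeq {disp : Order.disp_t} (L : tbDistrLatticeType disp) (a b c : L) : Prop :=
  b `&` a = c `&` a.
Definition qle {disp : Order.disp_t} (L : tbDistrLatticeType disp) (a b c : L) : Prop :=
  b `&` a <= c `&` a.
Definition qlt {disp : Order.disp_t} (L : tbDistrLatticeType disp) (a b c : L) : Prop :=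
  qle a b c /\ ~ qeq a b c.
Definition qdia {disp : Order.disp_t} (L : tbDistrLatticeType disp)
  (Ag : Type) (dia : Ag -> L -> L) (a : L) (i : Ag) (b : L) : L :=
  dia i (b `&` a).
Definition qbox {disp : Order.disp_t} (L : tbDistrLatticeType disp)
  (Ag : Type) (imp : L -> L -> L) (box : Ag -> L -> L) (a : L) (i : Ag) (b : L) : L :=
  box i (imp a b).

Definition is_qmin {disp : Order.disp_t} (L : tbDistrLatticeType disp)
  (Ag : Type) (dia : Ag -> L -> L) (a : L) (i : Ag) (c : L) : Prop :=
  [/\ ~ qeq a c \bot, qeq a (qdia dia a i c) c &
      forall d : L, qlt a d c -> qeq a (qdia dia a i d) d -> qeq a d \bot].

(* Only the closure-operator behaviour of [dia i] matters: it is monotone,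
   inflationary and idempotent (idempotence because [box i] is deflationary and
   [dia i x <= box i (dia i x)], [dia i (box i y) <= box i y]).  For an
   i-minimal [b], the fixed point [dia i (b `&` a)] lies between [b `&` a] and
   [b], which gives [dia^a_i [b] = [b]].  If [[d] < [b]] is fixed in A^a, then
   [dia i (d `&` a)] is a fixed point below [b]; it cannot be [b] (else
   [[d] = [b]]), so by minimality it is [\bot], and hence so is [d `&` a]. *)
From mathcomp Require Import all_boot all_order.
Import Order.TTheory.
Local Open Scope order_scope.

Section MonadicDiamond.

Variables (disp : Order.disp_t) (L : tbDistrLatticeType disp) (Ag : Type).
Variables (imp : L -> L -> L) (dia box : Ag -> L -> L).
Hypothesis monadicL : monadic_heyting imp dia box.

Lemma monadic_dia_mono (i : Ag) : {homo dia i : x y / x <= y}.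
Proof. by case: monadicL => _ /(_ i) []. Qed.

Lemma monadic_dia_ext (i : Ag) (x : L) : x <= dia i x.
Proof. by case: monadicL => _ /(_ i) [_ [_ []]]. Qed.

Lemma monadic_dia_idem (i : Ag) (x : L) : dia i (dia i x) = dia i x.
Proof.
case: monadicL => _ /(_ i) [_ [_ [dia_ext [box_defl [_ [_ [dia_le_box [dia_box _]]]]]]]].
have box_dia : box i (dia i x) = dia i x by apply: le_anti; rewrite box_defl dia_le_box.
by apply: le_anti; rewrite dia_ext andbT; have := dia_box (dia i x); rewrite box_dia.
Qed.

End MonadicDiamond.

Section PseudoQuotientMinimal.

Variables (disp : Order.disp_t) (L : tbDistrLatticeType disp) (Ag : Type).
Variables (dia : Ag -> L -> L) (i : Ag).
Hypothesis dia_mono : {homo dia i : x y / x <= y}.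
Hypothesis dia_ext : forall x, x <= dia i x.
Hypothesis dia_idem : forall x, dia i (dia i x) = dia i x.

Lemma is_min_fixed_le {b e : L} :
  is_min dia i b -> e <= b -> dia i e = e -> e = b \/ e = \bot.
Proof.
case=> _ _ minb; rewrite le_eqVlt => /predU1P[-> _|e_lt_b fix_e]; first by left.
by right; apply: minb.
Qed.

Lemma is_min_qdia_fixed {a b : L} : is_min dia i b -> qeq a (qdia dia a i b) b.
Proof.
case=> _ fix_b _; apply: le_anti; apply/andP; split.
  by rewrite /qdia leI2 // -[X in _ <= X]fix_b dia_mono ?leIl.
by rewrite lexI leIr dia_ext.
Qed.

Lemma is_min_qfixed_lt {a b : L} : is_min dia i b ->
  forall d, qlt a d b -> qeq a (qdia dia a i d) d -> qeq a d \bot.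
Proof.
move=> minb d [d_le_b d_neq_b] qfix_d; rewrite /qeq meet0x.
have fix_b : dia i b = b by case: minb.
have e_le_b : dia i (d `&` a) <= b.
  by rewrite -fix_b dia_mono // (le_trans d_le_b) ?leIl.
have [e_eq_b|e_eq0] := is_min_fixed_le minb e_le_b (dia_idem _).
  by case: d_neq_b; rewrite /qeq -qfix_d /qdia e_eq_b.
by apply/eqP; rewrite -lex0 -e_eq0 dia_ext.
Qed.

Lemma is_min_is_qmin (a b : L) :
  is_min dia i b -> b `&` a <> \bot -> is_qmin dia a i b.
Proof.
move=> minb ba_neq0; split.
- by rewrite /qeq meet0x.
- exact: is_min_qdia_fixed.
- exact: is_min_qfixed_lt minb.
Qed.

End PseudoQuotientMinimal.

Theorem lemma4 (disp : Order.disp_t) (L : finTBDistrLatticeType disp) (Ag : Type)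
  (imp : L -> L -> L) (dia box : Ag -> L -> L)
  (HA : epistemic_heyting imp dia box) (a : L) (i : Ag) (b : L) :
  is_min dia i b -> b `&` a <> \bot -> is_qmin dia a i b.
Proof.
case: HA => monadicL _.
apply: is_min_is_qmin.
- exact: monadic_dia_mono monadicL i.
- exact: monadic_dia_ext monadicL i.
- exact: monadic_dia_idem monadicL i.
Qed.
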